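(* For every $m\in\mathbb{N}$ and $\boldsymbol{X}\in\mathbb{N}^m$, writing $n_x:=m\widehat{\boldsymbol{\mu}}_m(x)$ for the number of occurrences of $x$ in $\boldsymbol{X}$, $$\hat{\mathfrak{R}}_m(\boldsymbol{X})=\frac1m\sum_{x:\,n_x>0}\frac{1}{2^{n_x}}\left\lceil\frac{n_x}{2}\right\rceil\binom{n_x}{\lceil n_x/2\rceil}.$$
   Context: $\widehat{\boldsymbol{\mu}}_m(i)=\frac1m\sum_{t=1}^m\mathbb{I}\{X_t=i\}$. $\hat{\mathfrak{R}}_m(\boldsymbol{X})=\mathbb{E}_{\boldsymbol{\sigma}}\big[\sup_{f:\mathbb{N}\to\{0,1\}}\frac1m\sum_{t=1}^m\sigma_tf(X_t)\big]$ with $\boldsymbol{\sigma}$ uniform on $\{-1,1\}^m$. *)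

From HB Require Import structures.
From mathcomp Require Import all_boot all_order all_algebra.
From mathcomp Require Import classical_sets boolp reals.
Set Implicit Arguments. Unset Strict Implicit. Unset Printing Implicit Defensive.
Import Order.TTheory GRing.Theory Num.Theory.
Local Open Scope ring_scope.
Local Open Scope classical_set_scope.

Definition rsign (R : realType) (b : bool) : R := if b then 1 else -1.

Definition rad_corr (R : realType) (m : nat) (X : 'I_m -> nat)
  (sigma : {ffun 'I_m -> bool}) (f : nat -> bool) : R :=
  m%:R^-1 * \sum_(t < m) rsign R (sigma t) * (f (X t))%:R.

(* empirical Rademacher complexity: expectation over uniform sigma in {-1,1}^m
   of the supremum over all f : N -> {0,1} *)
Definition emp_rademacher (R : realType) (m : nat) (X : 'I_m -> nat) : R :=
  (2 ^+ m)^-1 * \sum_(sigma : {ffun 'I_m -> bool})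
      sup [set @rad_corr R m X sigma f | f in [set: nat -> bool]].

Definition occ (m : nat) (X : 'I_m -> nat) (x : nat) : nat :=
  #|[set t : 'I_m | X t == x]|.

From HB Require Import structures.
From mathcomp Require Import all_boot all_order all_algebra.
From mathcomp Require Import classical_sets boolp reals.
From mathcomp Require Import zify.
Import Order.TTheory GRing.Theory Num.Theory.

(* For sigma : 'I_m -> bool and f : nat -> bool the correlation
   (1/m) sum_t sigma_t f(X_t) regroups by the value x = X_t as
   (1/m) sum_x f(x) S_x(sigma), where S_x(sigma) is the sum of the signs
   over the occurrences of x.  Hence the supremum over f is attained by
   f = [S_x(sigma) > 0] and equals (1/m) sum_x max(0, S_x(sigma)); averaging
   over sigma and exchanging the sums reduces the theorem to computing, for
   each value x with n = n_x occurrences, the mean of max(0, S_x(sigma)).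
   Identifying sigma with the set B of positions where it is +1, S_x only
   depends on k = |B n {t | X_t = x}| (it equals 2k - n), and each k is hit
   by C(n, k) * 2^(m - n) sets B.  The mean is thus
   2^-n sum_k C(n, k) (2k - n)_+, which a telescoping argument evaluates to
   2^-n ceil(n/2) C(n, ceil(n/2)). *)

(* Truncated subtraction makes k.*2 - n the positive part (2k - n)_+.
   Symmetry of the middle binomial coefficients: C(n, ceil(n/2)) = C(n, floor(n/2)). *)
Lemma binom_uphalf n : 'C(n, uphalf n) = 'C(n, n./2).
Proof.
have hn := odd_double_half n; rewrite uphalf_half.
case: (boolP (odd n)) hn => /= odd_n hn; last by rewrite add0n.
by rewrite -[RHS](@bin_sub n (n./2)); [congr 'C(_, _) |]; lia.
Qed.

Lemma half_binom_diag n : n * 'C(n.-1, n./2) = uphalf n * 'C(n, uphalf n).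
Proof. by case: n => [|n] //=; rewrite -mul_bin_diag binom_uphalf. Qed.

Lemma pospart_binom_step n i : n./2 <= i -> i < n ->
  'C(n, i.+1) * (i.+1.*2 - n) + n * 'C(n.-1, i.+1) = n * 'C(n.-1, i).
Proof.
move=> le_half_i lt_i_n; have hn := odd_double_half n.
rewrite mul_bin_down mul_bin_diag [_ * 'C(n, _)]mulnC [i.+1 * _]mulnC -mulnDr.
by congr (_ * _); case: (odd n) hn => /= hn; lia.
Qed.

Lemma pospart_binom_telescope n j u : n./2 <= j -> j <= u -> u <= n ->
  \sum_(j <= i < u) 'C(n, i.+1) * (i.+1.*2 - n) + n * 'C(n.-1, u) = n * 'C(n.-1, j).
Proof.
move=> le_half_j; elim: u => [|u IHu] le_j_Su le_Su_n.
  by rewrite (_ : j = 0) ?big_geq //; lia.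
have [le_j_u | lt_u_j] := leqP j u; last first.
  by rewrite (_ : j = u.+1) ?big_geq //; move: lt_u_j le_j_Su; lia.
rewrite big_nat_recr //= -addnA pospart_binom_step ?IHu //; lia.
Qed.

(* sum_k C(n, k) (2k - n)_+ = ceil(n/2) C(n, ceil(n/2)): the terms with
   k <= floor(n/2) vanish and the others telescope. *)
Lemma pospart_binom_sum n :
  \sum_(k < n.+1) 'C(n, k) * (k.*2 - n) = uphalf n * 'C(n, uphalf n).
Proof.
have hn := odd_double_half n; have le_half_n : n./2 <= n by lia.
rewrite -(big_mkord xpredT (fun k => 'C(n, k) * (k.*2 - n))).
rewrite (big_cat_nat _ (n := n./2.+1)) //=.
rewrite big1_seq /= ?add0n; last first.
  move=> k; rewrite mem_index_iota => /andP[_ lt_k_half].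
  suff -> : k.*2 - n = 0 by rewrite muln0.
  by case: (odd n) hn => /= hn; lia.
have vanish : n * 'C(n.-1, n) = 0.
  by case: n {hn le_half_n} => // n; rewrite bin_small ?muln0.
rewrite big_add1 /= -half_binom_diag.
by rewrite -(@pospart_binom_telescope n n./2 n (leqnn _) le_half_n (leqnn n)) vanish addn0.
Qed.

(* The sets B with a prescribed trace C on A are C u D for D a subset of ~A. *)
Lemma card_setI_fiber (T : finType) (A C : {set T}) : C \subset A ->
  #|[set B : {set T} | B :&: A == C]| = 2 ^ #|~: A|.
Proof.
move=> sub_CA.
have disjA (D : {set T}) : D \subset ~: A -> D :&: A = finset.set0.
  move=> sub_DA; apply/eqP.
  by rewrite finset.setI_eq0 -(finset.setCK A) -finset.subsets_disjoint.
have fiberE : [set B : {set T} | B :&: A == C] = [set C :|: D | D in powerset (~: A)].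
  apply/finset.setP => B; rewrite inE; apply/eqP/imsetP => [<- | [D]].
    exists (B :&: ~: A); first by rewrite inE finset.subsetIr.
    by rewrite -finset.setIUr finset.setUCr finset.setIT.
  rewrite inE => sub_DA ->.
  by rewrite finset.setIUl (finset.setIidPl sub_CA) disjA ?finset.setU0.
rewrite fiberE card_in_imset ?card_powerset // => D1 D2.
rewrite !inE => sub_D1A sub_D2A eq_D12.
have C_out : C :&: ~: A = finset.set0.
  by apply/eqP; rewrite finset.setI_eq0 -finset.subsets_disjoint.
have traceC (D : {set T}) : D \subset ~: A -> (C :|: D) :&: ~: A = D.
  by move=> sub_DA; rewrite finset.setIUl C_out finset.set0U (finset.setIidPl sub_DA).
by rewrite -(traceC _ sub_D1A) eq_D12 traceC.
Qed.

Local Open Scope ring_scope.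

Lemma sum_powerset_card (T : finType) (A : {set T}) (V : nmodType) (g : nat -> V) :
  \sum_(C in powerset A) g #|C| = \sum_(k < #|A|.+1) g k *+ 'C(#|A|, k).
Proof.
rewrite (partition_big (fun C : {set T} => (inord #|C| : 'I_#|A|.+1)) xpredT) //=.
apply: eq_bigr => k _; rewrite -cards_draws -sumr_const.
apply: eq_big => [C | C]; last first.
  by rewrite inE => /andP[sub_CA /eqP <-]; rewrite inordK // ltnS subset_leq_card.
rewrite !inE; case sub_CA: (C \subset A) => //=.
apply/eqP/eqP => [<- | ->]; last by apply: val_inj; rewrite /= inordK.
by rewrite inordK // ltnS subset_leq_card.
Qed.

(* A sum over all subsets B of T of a function of |B n A|: each trace C of
   size k occurs 2^|~A| times. *)
Lemma sum_setI_card (T : finType) (A : {set T}) (V : nmodType) (g : nat -> V) :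
  \sum_(B : {set T}) g #|B :&: A| = (\sum_(k < #|A|.+1) g k *+ 'C(#|A|, k)) *+ 2 ^ #|~: A|.
Proof.
rewrite (partition_big (fun B : {set T} => B :&: A) (mem (powerset A))) /=; last first.
  by move=> B _; rewrite inE finset.subsetIr.
rewrite -sum_powerset_card -sumrMnl; apply: eq_bigr => C; rewrite inE => sub_CA.
rewrite -(@card_setI_fiber _ A C sub_CA) -sumr_const.
by apply: eq_big => [B | B /eqP ->]; rewrite ?inE.
Qed.

Lemma occE (m : nat) (X : 'I_m -> nat) (x : nat) :
  occ X x = #|[set t : 'I_m | X t == x]%SET|.
Proof. by apply: eq_card => t; rewrite finset.inE; apply/idP/idP; rewrite in_setE. Qed.

Section EmpiricalRademacher.
Variables (R : realType) (m : nat) (X : 'I_m -> nat).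

Local Notation values := (undup [seq X t | t : 'I_m]).

Definition value_sign_sum (x : nat) (sigma : {ffun 'I_m -> bool}) : R :=
  \sum_(t < m | X t == x) rsign R (sigma t).

Lemma sum_by_value (F : 'I_m -> R) :
  \sum_(t < m) F t = \sum_(x <- values) \sum_(t < m | X t == x) F t.
Proof.
under [RHS]eq_bigr => x _ do rewrite big_mkcond.
rewrite exchange_big /=; apply: eq_bigr => t _.
rewrite -big_mkcond /= -big_filter.
have -> : [seq y <- values | X t == y] = filter (pred1 (X t)) values.
  by apply: eq_filter => y /=; rewrite eq_sym.
by rewrite filter_pred1_uniq ?undup_uniq ?big_seq1 // mem_undup map_f ?mem_enum.
Qed.

Lemma rad_corr_by_value sigma f :
  rad_corr R X sigma f = m%:R^-1 * \sum_(x <- values) (f x)%:R * value_sign_sum x sigma.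
Proof.
rewrite /rad_corr sum_by_value; congr (_ * _); apply: eq_bigr => x _.
by rewrite /value_sign_sum mulr_sumr; apply: eq_bigr => t /eqP ->; rewrite mulrC.
Qed.

(* The supremum over f is attained at the indicator of {x | S_x(sigma) > 0}. *)
Lemma sup_rad_corr sigma :
  sup [set rad_corr R X sigma f | f in [set: nat -> bool]] =
  m%:R^-1 * \sum_(x <- values) Num.max 0 (value_sign_sum x sigma).
Proof.
set E := (X in sup X); set best := (X in _ = X).
have E_best : E best.
  exists (fun x => 0 < value_sign_sum x sigma) => //.
  rewrite rad_corr_by_value /best; congr (_ * _); apply: eq_bigr => x _.
  by case: ltrP => /=; rewrite ?mul1r ?mul0r.
have ub_best : ubound E best.
  move=> y [f _ <-]; rewrite rad_corr_by_value /best ler_wpM2l ?invr_ge0 ?ler0n //.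
  by apply: ler_sum => x _; case: (f x); rewrite /= ?mul1r ?mul0r le_max lexx ?orbT.
apply/le_anti/andP; split; first by apply: ge_sup => //; exists best.
by apply: sup_upper_bound => //; split; exists best.
Qed.

Lemma value_sign_sum_set x (B : {set 'I_m}) :
  value_sign_sum x [ffun t => t \in B] =
  (#|B :&: [set t | X t == x]|.*2)%:R - #|[set t | X t == x]|%:R.
Proof.
set A := [set t | X t == x].
have signE t : rsign R ([ffun t => t \in B] t) = (t \in B)%:R *+ 2 - 1.
  by rewrite ffunE /rsign; case: (t \in B); rewrite ?mul0rn ?sub0r // mulr2n addrK.
rewrite /value_sign_sum (eq_bigl (fun t => t \in A)); last by move=> t; rewrite inE.
rewrite (eq_bigr _ (fun t _ => signE t)) sumrB sumr_const sumrMnl -natr_sum.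
have -> : (\sum_(t in A) (t \in B) : nat)%N = #|B :&: A|.
  by rewrite -big_mkcondr /= -sum1_card; apply: eq_bigl => t; rewrite !inE andbC.
by rewrite -muln2 natrM mulr_natr.
Qed.

Lemma pospart_value_sign_sum_set x (B : {set 'I_m}) :
  Num.max 0 (value_sign_sum x [ffun t => t \in B]) =
  ((#|B :&: [set t | X t == x]|.*2 - #|[set t | X t == x]|)%N)%:R.
Proof.
rewrite value_sign_sum_set; set k := #|_ :&: _|; set n := #|_|.
have [le_n_2k | lt_2k_n] := leqP n k.*2; first by rewrite -natrB // max_r // ler0n.
rewrite (_ : (k.*2 - n)%N = 0%N); last by apply/eqP; rewrite subn_eq0 ltnW.
by rewrite max_l // subr_le0 ler_nat ltnW.
Qed.

Lemma mean_pospart_value_sign_sum x :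
  (2 ^+ m)^-1 * \sum_(sigma : {ffun 'I_m -> bool}) Num.max 0 (value_sign_sum x sigma) =
  (2 ^+ occ X x)^-1 * ((uphalf (occ X x))%:R * ('C(occ X x, uphalf (occ X x)))%:R).
Proof.
rewrite occE; set A := [set t : 'I_m | X t == x]; set n := #|A|.
rewrite (reindex (fun B : {set 'I_m} => [ffun t => t \in B])) /=; last first.
  exists (fun sigma : {ffun 'I_m -> bool} => [set t | sigma t]) => [B _ | sigma _].
    by apply/finset.setP => t; rewrite inE ffunE.
  by apply/ffunP => t; rewrite ffunE inE.
under eq_bigr => B _ do rewrite pospart_value_sign_sum_set.
rewrite (@sum_setI_card _ A R (fun k => ((k.*2 - n)%N)%:R)).
have -> : \sum_(k < n.+1) ((k.*2 - n)%N)%:R *+ 'C(n, k) =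
           ((uphalf n * 'C(n, uphalf n))%N)%:R :> R.
  rewrite -pospart_binom_sum natr_sum; apply: eq_bigr => k _.
  by rewrite -mulr_natr -natrM mulnC.
have card_split : (n + #|~: A|)%N = m by rewrite cardsC card_ord.
have card_compl : #|~: A| = (m - n)%N by rewrite -[in RHS]card_split addKn.
have le_n_m : (n <= m)%N by rewrite -[in X in (_ <= X)%N]card_split leq_addr.
rewrite card_compl -[_ *+ 2 ^ (m - n)]mulr_natr natrX natrM -{1}(subnKC le_n_m) exprD invfM.
by rewrite mulrACA mulVf ?mulr1 // expf_neq0 // pnatr_eq0.
Qed.

End EmpiricalRademacher.

Theorem lemma4 (R : realType) (m : nat) (X : 'I_m -> nat) :
  emp_rademacher R X =
  m%:R^-1 * \sum_(x <- undup [seq X t | t : 'I_m] | (0 < occ X x)%N)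
     (2 ^+ occ X x)^-1 * ((uphalf (occ X x))%:R * ('C(occ X x, uphalf (occ X x)))%:R).
Proof.
rewrite /emp_rademacher.
under eq_bigr => sigma _ do rewrite sup_rad_corr.
rewrite -mulr_sumr mulrCA exchange_big /= mulr_sumr; congr (_ * _).
(* every value of X occurs at least once, so the filter is vacuous *)
rewrite [RHS]big_seq_cond [LHS]big_seq; apply: eq_big => [x | x _].
  case: (boolP (x \in _)) => //=; rewrite mem_undup => /mapP[t _ ->].
  by rewrite occE; apply/esym/card_gt0P; exists t; rewrite inE.
exact: mean_pospart_value_sign_sum.
Qed.
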